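(* Assume the standing assumptions (A1) and (A2) below. Let $t\in(1,2)$, $x^+\in D$, and for each $\alpha>0$ let $x_\alpha\in\operatorname{argmin}_{x\in D}\left[\frac12\|F(x^+)-F(x)\|_{\mathbb{Y}}^2+\alpha\|x\|_{\overline{r},1}\right]$. The following are equivalent: (i) $x^+\in k_t$; (ii) there is $C_2>0$ with $\frac12\|F(x^+)-F(x_\alpha)\|_{\mathbb{Y}}^2+\alpha\|x_\alpha\|_{\overline{r},1}\le C_2\alpha^{2-t}$ for all $\alpha>0$; (iii) there is $C_3>0$ with $\|F(x^+)-F(x_\alpha)\|_{\mathbb{Y}}\le C_3\alpha^{\frac{2-t}{2}}$ for all $\alpha>0$. More precisely, one can choose $C_2=C_t\|x^+\|_{k_t}^t$ with a constant $C_t$ depending only on $t$ and $L$, and $C_3=\sqrt{2C_2}$; and (iii) implies $\|x^+\|_{k_t}\le cC_3^{2/t}$ with a constant $c$ depending only on $t$ and $L$.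
   Context: $\Lambda$ is a countable index set. For a sequence $\omega$ of positive reals and $p\in(0,\infty)$, $\|x\|_{\omega,p}=\left(\sum_{j\in\Lambda}\omega_j^p|x_j|^p\right)^{1/p}$ (possibly $+\infty$) and $\ell^p_\omega=\{x\in\mathbb{R}^\Lambda:\|x\|_{\omega,p}<\infty\}$. For $t\in(0,2)$, $k_t=\{x:\|x\|_{k_t}<\infty\}$ with $\|x\|_{k_t}=\sup_{\alpha>0}\alpha\left(\sum_{j}\overline{a}_j^{-2}\overline{r}_j^2\mathbf{1}_{\{\overline{a}_j^{-2}\overline{r}_j\alpha<|x_j|\}}\right)^{1/t}$. (A1): $\overline{a},\overline{r}$ are sequences of positive reals indexed by $\Lambda$ such that for every $\varepsilon>0$ all but finitely many $j$ satisfy $\overline{a}_j\overline{r}_j^{-1}\le\varepsilon$; $\mathbb{Y}$ is a Banach space; $D\subseteq\ell^2_{\overline{a}}$ is closed with $D\cap\ell^1_{\overline{r}}\ne\emptyset$; $F:D\to\mathbb{Y}$ and there is $L>0$ with $L^{-1}\|x^{(1)}-x^{(2)}\|_{\overline{a},2}\le\|F(x^{(1)})-F(x^{(2)})\|_{\mathbb{Y}}\le L\|x^{(1)}-x^{(2)}\|_{\overline{a},2}$ for all $x^{(1)},x^{(2)}\in D$. (A2): if $x\in D$ and $z\in\ell^2_{\overline{a}}$ with $|z_j|\le|x_j|$ for all $j$, then $z\in D$. *)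

From HB Require Import structures.
From mathcomp Require Import all_boot all_order all_algebra.
From mathcomp Require Import all_classical all_reals all_analysis.
Set Implicit Arguments. Unset Strict Implicit. Unset Printing Implicit Defensive.
Import Order.TTheory GRing.Theory Num.Theory.
Import numFieldNormedType.Exports.
Local Open Scope classical_set_scope.
Local Open Scope ring_scope.

Section Defs.
Context {R : realType} {Lam : countType}.

Definition wnorm (w : Lam -> R) (p : R) (x : Lam -> R) : \bar R :=
  poweR (esum [set: Lam] (fun j => ((powR (w j) p * powR `|x j| p)%:E))) p^-1.

Definition lp (w : Lam -> R) (p : R) : set (Lam -> R) :=
  [set x | (wnorm w p x < +oo)%E].

Definition ktnorm (a r : Lam -> R) (t : R) (x : Lam -> R) : \bar R :=
  ereal_sup [set (alpha%:E *
     poweR (esum [set: Lam] (fun j =>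
        ((if a j ^- 2 * r j * alpha < `|x j| then a j ^- 2 * r j ^+ 2 else 0)%:E))) t^-1)%E
    | alpha in [set alpha : R | 0 < alpha]].

Definition kt (a r : Lam -> R) (t : R) : set (Lam -> R) :=
  [set x | (ktnorm a r t x < +oo)%E].

Definition closed_l2 (a : Lam -> R) (D : set (Lam -> R)) : Prop :=
  forall (xn : nat -> (Lam -> R)) (x : Lam -> R),
    (forall n, D (xn n)) -> lp a 2 x ->
    (fun n => wnorm a 2 (fun j => xn n j - x j)) @ \oo --> 0%E ->
    D x.

Definition A1 (a r : Lam -> R) (Y : normedModType R) (D : set (Lam -> R))
    (F : (Lam -> R) -> Y) (L : R) : Prop :=
  [/\ forall j, 0 < a j /\ 0 < r j,
      forall eps, 0 < eps -> finite_set [set j | eps < a j / r j],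
      D `<=` lp a 2 /\ closed_l2 a D,
      D `&` lp r 1 !=set0 &
      0 < L /\ forall x1 x2, D x1 -> D x2 ->
        ((L^-1)%:E * wnorm a 2 (fun j => (x1 j - x2 j)%R) <= (`|F x1 - F x2|)%:E)%E /\
        ((`|F x1 - F x2|)%:E <= L%:E * wnorm a 2 (fun j => (x1 j - x2 j)%R))%E].

Definition A2 (a : Lam -> R) (D : set (Lam -> R)) : Prop :=
  forall x z, D x -> lp a 2 z -> (forall j, `|z j| <= `|x j|) -> D z.

Definition tikh (r : Lam -> R) (Y : normedModType R) (F : (Lam -> R) -> Y)
    (xp : Lam -> R) (alpha : R) (x : Lam -> R) : \bar R :=
  ((2^-1 * `|F xp - F x| ^+ 2)%:E + alpha%:E * wnorm r 1 x)%E.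

End Defs.

From HB Require Import structures.
From mathcomp Require Import all_boot all_order all_algebra.
From mathcomp Require Import all_classical all_reals all_analysis.
From mathcomp Require Import ring lra.
Import Order.TTheory GRing.Theory Num.Theory.
Import numFieldNormedType.Exports.
Local Open Scope classical_set_scope.
Local Open Scope ring_scope.

(* Write W(be) for the sum inside the k_t-norm ([kt_level]); then ||x||_{k_t} <= k exactly
   when W(be) <= k^t be^-t for all be > 0.
   (i) -> (ii): test the minimality of x_alpha against the hard truncation of x+ at level alpha.
   Sorting the coordinates dyadically by the level at which they are cut, the discarded
   l^2_a-mass and the kept l^1_r-mass are bounded by geometric series of ratios 2^t/4 and
   2/2^t, which converge because 1 < t < 2; both are O(||x+||_{k_t}^t alpha^(2-t)).
   (ii) -> (iii) holds because the penalty term is nonnegative.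
   (iii) -> (i): given be > 0, take alpha = L^2 be/2 and compare x_alpha with its soft
   shrinkage by be r_j/(2 a_j^2) on the coordinates counted in W(be).  Optimality of x_alpha
   bounds the weight of the shrunk coordinates by 16 e^2/(L^2 be^2), where
   e = ||F(x+) - F(x_alpha)||; on the other counted coordinates x_alpha is far from x+, so
   they cost at most 4/be^2 ||x+ - x_alpha||^2_{a,2} <= 4 L^2 e^2/be^2.  Then
   e <= C3 alpha^((2-t)/2) gives W(be) = O(C3^2 be^-t). *)

Section esum_facts.
Context {R : realType}.
Local Open Scope ereal_scope.

Lemma esumZl_le {T : choiceType} (S : set T) (c : R) (f : T -> \bar R) :
  (0 <= c)%R -> (forall i, 0 <= f i) ->
  \esum_(i in S) (c%:E * f i) <= c%:E * \esum_(i in S) f i.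
Proof.
move=> c0 f0; apply: ge_ereal_sup => _ [X [finX XS] <-].
rewrite -ge0_mule_fsumr // lee_wpmul2l ?lee_fin //.
by apply: ereal_sup_ubound; exists X.
Qed.

Lemma esumZl {T : choiceType} (S : set T) (c : R) (f : T -> \bar R) :
  (0 < c)%R -> (forall i, 0 <= f i) ->
  \esum_(i in S) (c%:E * f i) = c%:E * \esum_(i in S) f i.
Proof.
move=> c0 f0; apply/eqP; rewrite eq_le; apply/andP; split; first exact: esumZl_le (ltW c0) f0.
rewrite -lee_pdivlMl //; apply: le_trans (esumZl_le _ _ _ _ _) => [||i].
- by apply: le_esum => i _; rewrite muleA -EFinM mulVf ?gt_eqF // mul1e.
- by rewrite invr_ge0 ltW.
- by rewrite mule_ge0 ?lee_fin ?(ltW c0).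
Qed.

Lemma esum_ge_term {T : choiceType} (S : set T) (f : T -> \bar R) i :
  (forall i, 0 <= f i) -> S i -> f i <= \esum_(j in S) f j.
Proof.
move=> f0 Si; apply: esum_ge; exists [set i]; last by rewrite fsbig_set1.
by split; [exact: finite_set1 | move=> _ ->].
Qed.

Lemma exchange_esum {T1 T2 : choiceType} (f : T1 -> T2 -> \bar R) :
  (forall i j, 0 <= f i j) ->
  \esum_(i in [set: T1]) \esum_(j in [set: T2]) f i j =
  \esum_(j in [set: T2]) \esum_(i in [set: T1]) f i j.
Proof.
move=> f0; rewrite !esum_esum //.
rewrite (reindex_esum ([set: T2] `*`` (fun=> [set: T1])) ([set: T1] `*`` (fun=> [set: T2]))
  (fun p => (p.2, p.1))) //.
split; first by move=> [].
- by move=> [? ?] [? ?] _ _ [-> ->].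
- by move=> [j i] _; exists (i, j).
Qed.

Lemma geometric_esum_le (c q : R) : (0 <= c)%R -> (0 <= q < 1)%R ->
  \esum_(m in [set: nat]) (c * q ^+ m)%:E <= (c / (1 - q))%:E.
Proof.
move=> c0 /andP[q0 q1].
have cq0 m : 0 <= (c * q ^+ m)%:E by rewrite lee_fin mulr_ge0 // exprn_ge0.
rewrite -nneseries_esumT //; apply: lime_le.
  by apply: is_cvg_nneseries => m _ _; exact: cq0.
apply: nearW => n; rewrite sumEFin lee_fin.
rewrite (_ : \sum_(0 <= m < n) _ = series (geometric c q) n)%R; last first.
  by rewrite /series /=; apply: eq_bigr => m _.
rewrite geometric_seriesE ?lt_eqF // ler_pdivlMr ?subr_gt0 // mulrVK ?unitfE ?gt_eqF ?subr_gt0 //.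
by rewrite ler_piMr // lerBlDr lerDl exprn_ge0.
Qed.

Lemma ge0_addeZ_EFin {x y : \bar R} {c n : R} : (0 < c)%R -> 0 <= x -> 0 <= y ->
  x + c%:E * y = n%:E -> exists u v : R, x = u%:E /\ y = v%:E.
Proof.
move=> c0; case: x => [u| |] // _; case: y => [v| |] //= _; last by rewrite gt0_muley.
- by exists u, v.
- by rewrite gt0_muley.
Qed.

Lemma ge0_bounded_EFin {x : \bar R} {y : R} : 0 <= x -> x <= y%:E ->
  exists2 u : R, x = u%:E & (u <= y)%R.
Proof. by case: x => [u| |] // _ uy; exists u. Qed.

End esum_facts.

Lemma ex_switch (P : pred nat) :
  ~~ P 0 -> (exists n, P n) -> exists m, ~~ P m && P m.+1.
Proof.
move=> P0 exP; case: (ex_minnP exP) => -[|m] Pm minP; first by rewrite Pm in P0.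
by exists m; rewrite Pm andbT; apply/negP => /minP; rewrite ltnn.
Qed.

Section dyadic.
Context {R : realType}.

Lemma exists_pow2_gt (y : R) : exists n : nat, y < 2 ^+ n.
Proof.
have [y0|y0] := leP y 0; first by exists 0%N; rewrite expr0 (le_lt_trans y0).
exists (Num.bound y); apply: lt_le_trans (archi_boundP (ltW y0)) _.
by rewrite -natrX ler_nat ltnW // ltn_expl.
Qed.

Lemma dyadic_below (u al : R) : 0 < u -> u <= al ->
  exists m : nat, al / 2 ^+ m.+1 < u /\ u <= al / 2 ^+ m.
Proof.
move=> u0 ual; have [n hn] := exists_pow2_gt (al / u).
pose P m := al / 2 ^+ m < u.
have [m /andP[Pm Pm1]] : exists m, ~~ P m && P m.+1.
  apply: ex_switch; first by rewrite /P expr0 divr1 -leNgt.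
  by exists n; rewrite /P ltr_pdivrMr ?exprn_gt0 // mulrC -ltr_pdivrMr.
by exists m; split; [|rewrite leNgt].
Qed.

Lemma dyadic_above (u al : R) : 0 < al -> al < u ->
  exists m : nat, al * 2 ^+ m < u /\ u <= al * 2 ^+ m.+1.
Proof.
move=> al0 alu; have [n hn] := exists_pow2_gt (u / al).
pose P m := u <= al * 2 ^+ m.
have [m /andP[Pm Pm1]] : exists m, ~~ P m && P m.+1.
  apply: ex_switch; first by rewrite /P expr0 mulr1 -ltNge.
  by exists n; rewrite /P mulrC -ler_pdivrMr // ltW.
by exists m; split; [rewrite ltNge|].
Qed.

End dyadic.

Section powR_facts.
Context {R : realType}.

Lemma powR_exprn (x t : R) (n : nat) : 0 <= x -> (x ^+ n) `^ t = (x `^ t) ^+ n.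
Proof.
by move=> x0; rewrite -powR_mulrn // -powRrM mulrC powRrM powR_mulrn // powR_ge0.
Qed.

Lemma powRVn (x t : R) : 0 <= x -> (x^-1) `^ t = (x `^ t)^-1.
Proof. by move=> x0; rewrite -powR_inv1 // powRAC powR_inv1 // powR_ge0. Qed.

Lemma ltr_powR2 (x y : R) : (2 `^ x < 2 `^ y) = (x < y).
Proof. by rewrite /powR pnatr_eq0 /= ltr_expR ltr_pM2r // ln_gt0 // ltr1n. Qed.

Lemma powR2_gt2 (t : R) : 1 < t -> 2 < 2 `^ t.
Proof. by rewrite -ltr_powR2 powRr1. Qed.

Lemma powR2_lt4 (t : R) : t < 2 -> 2 `^ t < 4.
Proof. by rewrite -ltr_powR2 powR_mulrn // expr2 -natrM. Qed.

Lemma scaled_root_le (be t w k : R) : 0 < be -> 0 < t -> 0 <= w -> 0 <= k ->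
  (be * w `^ t^-1 <= k) = (w <= k `^ t / be `^ t).
Proof.
move=> be0 t0 w0 k0.
have bew0 : 0 <= be `^ t * w by rewrite mulr_ge0 ?powR_ge0.
have -> : be * w `^ t^-1 = (be `^ t * w) `^ t^-1.
  by rewrite powRM ?powR_ge0 // -powRrM mulfV ?gt_eqF // powRr1 // ltW.
rewrite ler_pdivlMr ?powR_gt0 // [w * _]mulrC; apply/idP/idP => h.
- have := ge0_ler_powR (ltW t0) _ _ h.
  by rewrite -powRrM mulVf ?gt_eqF // powRr1 //; apply; rewrite nnegrE ?powR_ge0.
- have ti0 : 0 <= t^-1 by rewrite invr_ge0 ltW.
  have := ge0_ler_powR ti0 _ _ h.
  by rewrite -powRrM mulfV ?gt_eqF // powRr1 //; apply; rewrite nnegrE ?powR_ge0.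
Qed.

End powR_facts.

Section weighted_norms.
Context {R : realType} {Lam : countType}.
Variable w : Lam -> R.
Hypothesis w_ge0 : forall j, 0 <= w j.
Implicit Types x z : Lam -> R.

Definition sqnorm x : \bar R := \esum_(j in [set: Lam]) (w j ^+ 2 * x j ^+ 2)%:E.

Definition norm1 x : \bar R := \esum_(j in [set: Lam]) (w j * `|x j|)%:E.

Lemma sqnorm_ge0 x : (0 <= sqnorm x)%E.
Proof. by apply: esum_ge0 => j _; rewrite lee_fin mulr_ge0 ?sqr_ge0. Qed.

Lemma norm1_ge0 x : (0 <= norm1 x)%E.
Proof. by apply: esum_ge0 => j _; rewrite lee_fin mulr_ge0. Qed.

Lemma wnorm2E x : wnorm w 2 x = poweR (sqnorm x) 2^-1.
Proof.
congr poweR; apply: eq_esum => j _.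
by rewrite !powR_mulrn // real_normK // num_real.
Qed.

Lemma wnorm1E x : wnorm w 1 x = norm1 x.
Proof.
rewrite /wnorm invr1 poweRe1; last by apply: esum_ge0 => j _; rewrite lee_fin mulr_ge0 ?powR_ge0.
by apply: eq_esum => j _; rewrite !powRr1.
Qed.

Lemma lp2E x : lp w 2 x <-> (sqnorm x < +oo)%E.
Proof.
rewrite /lp /= wnorm2E; split; last exact: poweR_lty.
by apply: lty_poweRy; rewrite invr_eq0 pnatr_eq0.
Qed.

Lemma le_sqnorm x z : (forall j, `|z j| <= `|x j|) -> (sqnorm z <= sqnorm x)%E.
Proof.
move=> zx; apply: le_esum => j _; rewrite lee_fin ler_wpM2l ?sqr_ge0 //.
by rewrite -[z j ^+ 2]real_normK ?num_real // -[x j ^+ 2]real_normK ?num_real // ler_sqr.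
Qed.

Lemma sqnorm_le_lip x (L e : R) : 0 < L ->
  ((L^-1)%:E * wnorm w 2 x <= e%:E)%E -> (sqnorm x <= ((L * e) ^+ 2)%:E)%E.
Proof.
move=> L0; rewrite wnorm2E; have := sqnorm_ge0 x.
case: (sqnorm x) => [s| _|] //; last first.
  by rewrite poweRyr ?invr_eq0 ?pnatr_eq0 // gt0_muley ?lte_fin ?invr_gt0.
rewrite lee_fin => s0; rewrite poweR_EFin powR12_sqrt // -EFinM !lee_fin.
rewrite -ler_pdivlMl ?invr_gt0 // invrK => se.
by rewrite -(sqr_sqrtr s0) ler_sqr ?nnegrE ?sqrtr_ge0 // (le_trans (sqrtr_ge0 s)).
Qed.

Lemma sqr_le_lip x (L e : R) : 0 < L -> 0 <= e ->
  (e%:E <= L%:E * wnorm w 2 x)%E -> ((e ^+ 2)%:E <= (L ^+ 2)%:E * sqnorm x)%E.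
Proof.
move=> L0 e0; rewrite wnorm2E; have := sqnorm_ge0 x.
case: (sqnorm x) => [s| _ _|] //; last by rewrite gt0_muley ?lte_fin ?exprn_gt0 ?leey.
rewrite lee_fin => s0; rewrite poweR_EFin powR12_sqrt // -!EFinM !lee_fin => es.
by rewrite -[in X in _ <= X](sqr_sqrtr s0) -exprMn ler_sqr ?nnegrE // mulr_ge0 ?sqrtr_ge0 ?ltW.
Qed.

End weighted_norms.

Lemma quadratic_gain_le {R : realFieldType} (e s : R) : 0 <= e -> 0 <= s ->
  e ^+ 2 / 2 + s ^+ 2 / 4 <= (e + s / 2) ^+ 2 / 2 -> s <= 4 * e.
Proof. by move=> e0 s0 h; nra. Qed.

(* The sums of the geometric series in [kt_lower_tail] and [kt_upper_part]. *)
Definition kt_tikh_const {R : realType} (t L : R) : R :=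
  L ^+ 2 / 2 * (2 `^ t / (1 - 2 `^ t / 4)) + 2 / (1 - 2 / 2 `^ t).

(* [kt_level_le_residual] at alpha = L^2 be/2, raised to the power 1/t. *)
Definition kt_resid_const {R : realType} (t L : R) : R :=
  ((16 / L ^+ 2 + 4 * L ^+ 2) * (L ^+ 2 / 2) `^ (2 - t)) `^ t^-1.

Lemma kt_tikh_const_gt0 {R : realType} (t L : R) : 1 < t < 2 -> 0 < kt_tikh_const t L.
Proof.
move=> /andP[t1 t2]; have rho2 := powR2_gt2 _ t1; have rho4 := powR2_lt4 _ t2.
have rho0 : 0 < 2 `^ t by rewrite powR_gt0.
have q4 : 0 < 1 - 2 `^ t / 4 by rewrite subr_gt0 ltr_pdivrMr // mul1r.
have q2 : 0 < 1 - 2 / 2 `^ t by rewrite subr_gt0 ltr_pdivrMr // mul1r.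
apply: ltr_wpDl; last exact: divr_gt0 (ltr0Sn _ 1) q2.
exact: mulr_ge0 (divr_ge0 (sqr_ge0 L) (ler0n _ 2)) (divr_ge0 (ltW rho0) (ltW q4)).
Qed.

Lemma kt_resid_const_gt0 {R : realType} (t L : R) : 0 < L -> 0 < kt_resid_const t L.
Proof.
move=> L0; have L20 : 0 < L ^+ 2 by rewrite exprn_gt0.
apply/powR_gt0/mulr_gt0; last by rewrite powR_gt0 // divr_gt0.
exact: addr_gt0 (divr_gt0 (ltr0Sn _ 15) L20) (mulr_gt0 (ltr0Sn _ 3) L20).
Qed.

Section kt_level.
Context {R : realType} {Lam : countType}.
Variables (a r : Lam -> R).
Hypotheses (a_gt0 : forall j, 0 < a j) (r_gt0 : forall j, 0 < r j).

Definition kt_weight (x : Lam -> R) (be : R) (j : Lam) : R :=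
  if a j ^- 2 * r j * be < `|x j| then a j ^- 2 * r j ^+ 2 else 0.

Definition kt_level (x : Lam -> R) (be : R) : \bar R :=
  \esum_(j in [set: Lam]) (kt_weight x be j)%:E.

Let a_ge0 j : 0 <= a j. Proof. exact: ltW. Qed.
Let r_ge0 j : 0 <= r j. Proof. exact: ltW. Qed.

Let ws_ge0 j : 0 <= a j ^- 2 * r j ^+ 2.
Proof. by rewrite mulr_ge0 ?invr_ge0 ?exprn_ge0 ?ltW. Qed.

Lemma kt_weight_ge0 x be j : 0 <= kt_weight x be j.
Proof. by rewrite /kt_weight; case: ifP. Qed.

Lemma kt_level_ge0 x be : (0 <= kt_level x be)%E.
Proof. by apply: esum_ge0 => j _; rewrite lee_fin kt_weight_ge0. Qed.

Lemma kt_level_le_ktnorm t x be : 0 < be ->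
  (be%:E * poweR (kt_level x be) t^-1 <= ktnorm a r t x)%E.
Proof. by move=> be0; apply: ereal_sup_ubound; exists be. Qed.

Lemma ktnorm_ge0 t x : (0 <= ktnorm a r t x)%E.
Proof.
apply: le_trans (kt_level_le_ktnorm t x _ ltr01).
by rewrite mul1e poweR_ge0.
Qed.

Lemma kt_level_le t k x be : 0 < t -> ktnorm a r t x = k%:E -> 0 < be ->
  (kt_level x be <= (k `^ t / be `^ t)%:E)%E.
Proof.
move=> t0 kE be0; have := kt_level_le_ktnorm t x _ be0; rewrite kE.
have k0 : 0 <= k by rewrite -lee_fin -kE ktnorm_ge0.
have := kt_level_ge0 x be; case: (kt_level x be) => [w w0| _|] //.
- by rewrite poweR_EFin -EFinM !lee_fin scaled_root_le.
- by rewrite poweRyr ?invr_eq0 ?gt_eqF // gt0_muley ?lte_fin.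
Qed.

Lemma ktnorm_le t M x : 0 < t -> 0 <= M ->
  (forall be, 0 < be -> (kt_level x be <= (M / be `^ t)%:E)%E) ->
  (ktnorm a r t x <= (M `^ t^-1)%:E)%E.
Proof.
move=> t0 M0 hM; apply: ge_ereal_sup => _ [be /= be0 <-].
change (be%:E * poweR (kt_level x be) t^-1 <= (M `^ t^-1)%:E)%E.
have := hM be be0; have := kt_level_ge0 x be.
case: (kt_level x be) => [w w0 hw| //|] //.
rewrite poweR_EFin -EFinM lee_fin scaled_root_le ?powR_ge0 //.
by rewrite -powRrM mulVf ?gt_eqF // powRr1.
Qed.

Lemma esum_dyadic_le t k x (g be : nat -> R) :
  0 < t -> ktnorm a r t x = k%:E -> (forall m, 0 <= g m) -> (forall m, 0 < be m) ->
  (\esum_(j in [set: Lam]) \esum_(m in [set: nat]) (g m * kt_weight x (be m) j)%:E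
   <= \esum_(m in [set: nat]) (g m * (k `^ t / be m `^ t))%:E)%E.
Proof.
move=> t0 kE g0 be0.
rewrite exchange_esum => [|j m]; last by rewrite lee_fin mulr_ge0 ?kt_weight_ge0.
apply: le_esum => m _; under eq_esum do rewrite EFinM.
apply: le_trans (esumZl_le _ _ _ (g0 m) _) _ => [j|]; first by rewrite lee_fin kt_weight_ge0.
by rewrite EFinM lee_wpmul2l ?lee_fin // kt_level_le.
Qed.

Lemma lower_term_le x al j : 0 < al ->
  ((if a j ^- 2 * r j * al < `|x j| then 0 else a j ^+ 2 * x j ^+ 2)%:E
   <= \esum_(m in [set: nat]) (al ^+ 2 / 4 ^+ m * kt_weight x (al / 2 ^+ m.+1) j)%:E)%E.
Proof.
move=> al0; have aj0 := a_gt0 j.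
have term0 m : (0 <= (al ^+ 2 / 4 ^+ m * kt_weight x (al / 2 ^+ m.+1) j)%:E)%E.
  by rewrite lee_fin mulr_ge0 ?kt_weight_ge0 // divr_ge0 ?sqr_ge0 ?exprn_ge0.
case: ifPn => [_|]; first exact: esum_ge0.
set c := a j ^- 2 * r j; rewrite -leNgt => xle.
have [->|xn0] := eqVneq (x j) 0; first by rewrite expr0n mulr0 esum_ge0.
have xj0 : 0 < `|x j| by rewrite normr_gt0.
have [m [xgt xle']] := dyadic_below _ _ xj0 xle.
apply: le_trans (esum_ge_term _ _ m term0 I).
rewrite /kt_weight -/c [c * _]mulrA ifT // lee_fin.
have x2 : x j ^+ 2 <= (c * al / 2 ^+ m) ^+ 2.
  by rewrite -real_normK ?num_real // ler_sqr // nnegrE (le_trans _ xle').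
apply: le_trans (ler_wpM2l (sqr_ge0 (a j)) x2) _; rewrite le_eqVlt; apply/orP; left.
have -> : (4 : R) ^+ m = (2 ^+ m) ^+ 2 by rewrite -exprM mulnC exprM expr2 -natrM.
by apply/eqP; rewrite /c; field; rewrite gt_eqF // expf_neq0.
Qed.

Lemma upper_term_le x al j : 0 < al ->
  ((if a j ^- 2 * r j * al < `|x j| then r j * `|x j| else 0)%:E
   <= \esum_(m in [set: nat]) (al * 2 ^+ m.+1 * kt_weight x (al * 2 ^+ m) j)%:E)%E.
Proof.
move=> al0; have aj0 := a_gt0 j.
have term0 m : (0 <= (al * 2 ^+ m.+1 * kt_weight x (al * 2 ^+ m) j)%:E)%E.
  by rewrite lee_fin mulr_ge0 ?kt_weight_ge0 // mulr_ge0 ?exprn_ge0 ?ltW.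
case: ifPn => [|_]; last exact: esum_ge0.
set c := a j ^- 2 * r j => xgt.
have c0 : 0 < c by rewrite mulr_gt0 ?invr_gt0 ?exprn_gt0.
have [m [xgt' xle]] := dyadic_above _ _ (mulr_gt0 c0 al0) xgt.
apply: le_trans (esum_ge_term _ _ m term0 I).
rewrite /kt_weight -/c [c * _]mulrA ifT // lee_fin.
apply: le_trans (ler_wpM2l (ltW (r_gt0 j)) xle) _; rewrite le_eqVlt; apply/orP; left.
by apply/eqP; rewrite /c; field; rewrite gt_eqF.
Qed.

Lemma kt_lower_tail t k x al : 0 < t < 2 -> ktnorm a r t x = k%:E -> 0 < al ->
  (\esum_(j in [set: Lam]) (if a j ^- 2 * r j * al < `|x j| then 0 else a j ^+ 2 * x j ^+ 2)%:E
   <= (2 `^ t * k `^ t * al `^ (2 - t) / (1 - 2 `^ t / 4))%:E)%E.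
Proof.
move=> /andP[t0 t2] kE al0; set rho := 2 `^ t.
have rho0 : 0 < rho by rewrite powR_gt0.
have rho4 : rho < 4 by exact: powR2_lt4.
apply: le_trans (le_esum (fun j _ => lower_term_le x _ j al0)) _.
apply: le_trans (esum_dyadic_le _ _ _ _ _ t0 kE _ _) _.
- by move=> m; rewrite divr_ge0 ?sqr_ge0 ?exprn_ge0.
- by move=> m; rewrite divr_gt0 ?exprn_gt0.
have term m : al ^+ 2 / 4 ^+ m * (k `^ t / (al / 2 ^+ m.+1) `^ t)
              = rho * k `^ t * al `^ (2 - t) * (rho / 4) ^+ m.
  rewrite powRM ?invr_ge0 ?exprn_ge0 ?ltW // powRVn ?exprn_ge0 // powR_exprn //.
  rewrite powRB ?gt_eqF ?implybT // powR_mulrn ?ltW // exprMn exprVn -/rho [rho ^+ _.+1]exprS.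
  by field; rewrite !gt_eqF ?powR_gt0 ?exprn_gt0.
under eq_esum do rewrite term.
apply: geometric_esum_le; first by rewrite !mulr_ge0 ?powR_ge0 ?ltW.
by rewrite divr_ge0 ?ltW //= ltr_pdivrMr ?mul1r.
Qed.

Lemma kt_upper_part t k x al : 1 < t -> ktnorm a r t x = k%:E -> 0 < al ->
  (\esum_(j in [set: Lam]) (if a j ^- 2 * r j * al < `|x j| then r j * `|x j| else 0)%:E
   <= (2 * k `^ t * al `^ (1 - t) / (1 - 2 / 2 `^ t))%:E)%E.
Proof.
move=> t1 kE al0; set rho := 2 `^ t.
have t0 : 0 < t by rewrite (lt_trans ltr01).
have rho2 : 2 < rho by exact: powR2_gt2.
have rho0 : 0 < rho by rewrite (lt_trans _ rho2).
apply: le_trans (le_esum (fun j _ => upper_term_le x _ j al0)) _.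
apply: le_trans (esum_dyadic_le _ _ _ _ _ t0 kE _ _) _.
- by move=> m; rewrite mulr_ge0 ?exprn_ge0 ?ltW.
- by move=> m; rewrite mulr_gt0 ?exprn_gt0.
have al1t : al `^ (1 - t) = al / al `^ t.
  by rewrite powRB ?powRr1 ?(gt_eqF al0) ?implybT // ltW.
have term m : al * 2 ^+ m.+1 * (k `^ t / (al * 2 ^+ m) `^ t)
              = 2 * k `^ t * al `^ (1 - t) * (2 / rho) ^+ m.
  rewrite powRM ?exprn_ge0 ?ltW // powR_exprn // al1t exprMn exprVn exprS -/rho.
  by field; rewrite !gt_eqF ?powR_gt0 ?exprn_gt0.
under eq_esum do rewrite term.
apply: geometric_esum_le; first by rewrite !mulr_ge0 ?powR_ge0.
by rewrite divr_ge0 ?ltW //= ltr_pdivrMr ?mul1r.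
Qed.

Definition kt_trunc (al : R) (x : Lam -> R) (j : Lam) : R :=
  if a j ^- 2 * r j * al < `|x j| then x j else 0.

Section shrink.
Variables (xp x : Lam -> R) (be : R).
Hypothesis be_gt0 : 0 < be.

Let d j := a j ^- 2 * r j * be / 2.

Let d_gt0 j : 0 < d j.
Proof. by rewrite !mulr_gt0 ?invr_gt0 ?exprn_gt0. Qed.

Definition shrink_set j : bool :=
  (a j ^- 2 * r j * be < `|xp j|) && (a j ^- 2 * r j * be / 2 < `|x j|).

Definition shrink j : R :=
  if shrink_set j then x j * (1 - a j ^- 2 * r j * be / 2 / `|x j|) else x j.

Let shrink_term_ge0 j : (0 <= (if shrink_set j then a j ^- 2 * r j ^+ 2 else 0)%:E)%E.
Proof. by case: ifP => _; rewrite lee_fin ?ws_ge0. Qed.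

Definition shrink_weight : \bar R :=
  \esum_(j in [set: Lam]) (if shrink_set j then a j ^- 2 * r j ^+ 2 else 0)%:E.

Lemma shrink_weight_ge0 : (0 <= shrink_weight)%E.
Proof. exact: esum_ge0. Qed.

Lemma norm_shrink j : `|shrink j| = if shrink_set j then `|x j| - d j else `|x j|.
Proof.
rewrite /shrink -/(d j); case: ifP => // /andP[_ dx].
have x0 : 0 < `|x j| := lt_trans (d_gt0 j) dx.
have dx1 : d j / `|x j| <= 1 by rewrite ler_pdivrMr // mul1r ltW.
rewrite normrM [`|1 - _|]ger0_norm ?subr_ge0 //.
by rewrite mulrBr mulr1 mulrCA divff ?mulr1 ?gt_eqF.
Qed.

Lemma shrink_le j : `|shrink j| <= `|x j|.
Proof. by have := norm_shrink j; case: ifP => _ ->; rewrite // lerBlDr lerDl (ltW (d_gt0 j)). Qed.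

Lemma norm1_shrink : norm1 r x = (norm1 r shrink + (be / 2)%:E * shrink_weight)%E.
Proof.
rewrite -esumZl ?divr_gt0 // -esumD; last 2 first.
- by move=> j _; rewrite lee_fin mulr_ge0 ?(ltW (r_gt0 j)).
- by move=> j _; rewrite mule_ge0 ?shrink_term_ge0 // lee_fin divr_ge0 // ltW.
apply: eq_esum => j _; rewrite -EFinM -EFinD norm_shrink.
by case: ifP => _; [congr EFin; rewrite /d; field; rewrite gt_eqF | rewrite mulr0 addr0].
Qed.

Lemma sqnorm_sub_shrink :
  sqnorm a (fun j => x j - shrink j) = (((be / 2) ^+ 2)%:E * shrink_weight)%E.
Proof.
rewrite -esumZl ?exprn_gt0 ?divr_gt0 //; apply: eq_esum => j _; rewrite -EFinM.
case sj : (shrink_set j); last by rewrite /shrink sj subrr expr0n !mulr0.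
have x0 : 0 < `|x j| by move: sj; rewrite /shrink_set => /andP[_]; apply: lt_trans (d_gt0 j).
have -> : x j - shrink j = x j * (d j / `|x j|) by rewrite /shrink sj /d; ring.
rewrite exprMn -[x j ^+ 2]real_normK ?num_real //; congr EFin; rewrite /d.
by field; rewrite !gt_eqF.
Qed.

Lemma kt_level_le_shrink :
  (kt_level xp be <= shrink_weight + (4 / be ^+ 2)%:E * sqnorm a (fun j => (xp j - x j)%R))%E.
Proof.
have gap0 j : 0 <= 4 / be ^+ 2 * (a j ^+ 2 * (xp j - x j) ^+ 2).
  exact: mulr_ge0 (divr_ge0 (ler0n _ 4) (sqr_ge0 _)) (mulr_ge0 (sqr_ge0 _) (sqr_ge0 _)).
rewrite -esumZl ?divr_gt0 ?exprn_gt0 // => [|j]; last by rewrite lee_fin mulr_ge0 ?sqr_ge0.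
rewrite -esumD // => [|j _]; last by rewrite -EFinM lee_fin.
apply: le_esum => j _; rewrite -EFinM -EFinD lee_fin /kt_weight /shrink_set.
case: ifP => /= [xpgt|_]; last by rewrite add0r.
case: ifP => [_|/negbT]; first by rewrite lerDl.
rewrite -leNgt add0r => xle.
have dle : d j <= `|xp j - x j|.
  apply: le_trans (lerB_dist _ _); rewrite lerBrDr.
  by apply: le_trans (lerD (lexx _) xle) _; rewrite /d -splitr ltW.
have -> : a j ^- 2 * r j ^+ 2 = 4 / be ^+ 2 * (a j ^+ 2 * d j ^+ 2).
  by rewrite /d; field; rewrite !gt_eqF.
rewrite ler_wpM2l ?divr_ge0 ?sqr_ge0 // ler_wpM2l ?sqr_ge0 //.
by rewrite -[(xp j - x j) ^+ 2]real_normK ?num_real // ler_sqr ?nnegrE ?(ltW (d_gt0 j)).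
Qed.

End shrink.

Section tikhonov.
Context {Y : normedModType R}.
Variables (D : set (Lam -> R)) (F : (Lam -> R) -> Y) (L : R).
Hypothesis L_gt0 : 0 < L.
Hypotheses (D_l2 : D `<=` lp a 2) (D_solid : A2 a D).
Hypothesis F_lip : forall x1 x2, D x1 -> D x2 ->
  ((L^-1)%:E * wnorm a 2 (fun j => (x1 j - x2 j)%R) <= (`|F x1 - F x2|)%:E)%E /\
  ((`|F x1 - F x2|)%:E <= L%:E * wnorm a 2 (fun j => (x1 j - x2 j)%R))%E.

Lemma tikhE xp al x :
  tikh r F xp al x = ((2^-1 * `|F xp - F x| ^+ 2)%:E + al%:E * norm1 r x)%E.
Proof. by rewrite /tikh wnorm1E. Qed.

Lemma D_le x z : D x -> (forall j, `|z j| <= `|x j|) -> D z.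
Proof.
move=> Dx zx; apply: (D_solid _ _ Dx _ zx); apply/lp2E => //.
by apply: le_lt_trans (le_sqnorm a _ _ zx) _; apply/lp2E => //; exact: D_l2.
Qed.

Lemma sqnorm_sub_le {x1 x2} : D x1 -> D x2 ->
  (sqnorm a (fun j => (x1 j - x2 j)%R) <= ((L * `|F x1 - F x2|) ^+ 2)%:E)%E.
Proof. by move=> D1 D2; apply: sqnorm_le_lip => //; case: (F_lip _ _ D1 D2). Qed.

Lemma sqr_sub_le {x1 x2} : D x1 -> D x2 ->
  ((`|F x1 - F x2| ^+ 2)%:E <= (L ^+ 2)%:E * sqnorm a (fun j => (x1 j - x2 j)%R))%E.
Proof. by move=> D1 D2; apply: sqr_le_lip => //; case: (F_lip _ _ D1 D2). Qed.

Lemma tikh_kt_trunc_le {t k xp al} : 1 < t < 2 -> D xp -> ktnorm a r t xp = k%:E -> 0 < al ->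
  D (kt_trunc al xp) /\
  (tikh r F xp al (kt_trunc al xp) <= (kt_tikh_const t L * k `^ t * al `^ (2 - t))%:E)%E.
Proof.
move=> /andP[t1 t2] Dxp kE al0; set z := kt_trunc al xp.
have Dz : D z by apply: D_le Dxp _ => j; rewrite /z /kt_trunc; case: ifP; rewrite ?normr0.
split => //; set rho := 2 `^ t.
have rho0 : 0 < rho by rewrite powR_gt0.
have t02 : 0 < t < 2 by rewrite t2 (lt_trans ltr01).
have low := kt_lower_tail _ _ xp _ t02 kE al0.
have up := kt_upper_part _ _ xp _ t1 kE al0.
rewrite -/rho in low up.
have lowE : sqnorm a (fun j => (xp j - z j)%R) =
    \esum_(j in [set: Lam]) (if a j ^- 2 * r j * al < `|xp j| then 0 else a j ^+ 2 * xp j ^+ 2)%:E.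
  by apply: eq_esum => j _; rewrite /z /kt_trunc; case: ifP; rewrite ?subrr ?subr0 ?expr0n ?mulr0.
have upE : norm1 r z =
    \esum_(j in [set: Lam]) (if a j ^- 2 * r j * al < `|xp j| then r j * `|xp j| else 0)%:E.
  by apply: eq_esum => j _; rewrite /z /kt_trunc; case: ifP; rewrite ?normr0 ?mulr0.
rewrite -lowE in low; rewrite -upE in up.
have resid : `|F xp - F z| ^+ 2 <= L ^+ 2 * (rho * k `^ t * al `^ (2 - t) / (1 - rho / 4)).
  rewrite -lee_fin EFinM; apply: le_trans (sqr_sub_le Dxp Dz) _.
  by rewrite [X in (_ <= X)%E]EFinM lee_wpmul2l // lee_fin sqr_ge0.
rewrite tikhE; have [nz -> nzle] := ge0_bounded_EFin (norm1_ge0 _ r_ge0 z) up.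
rewrite -EFinM -EFinD lee_fin.
apply: le_trans (lerD (ler_wpM2l _ resid) (ler_wpM2l (ltW al0) nzle)) _.
  by rewrite invr_ge0.
rewrite le_eqVlt; apply/orP; left; apply/eqP.
have alt : al * al `^ (1 - t) = al `^ (2 - t).
  have t2gt0 : 0 < 2 - t by rewrite subr_gt0.
  by rewrite -(mulr_powRB1 (ltW al0) t2gt0); congr (_ * _ `^ _); lra.
rewrite /kt_tikh_const -/rho -alt.
have rho4 : rho < 4 by exact: powR2_lt4.
have rho2 : 2 < rho by exact: powR2_gt2.
by field; rewrite !gt_eqF ?subr_gt0 ?ltr_pdivrMr ?mul1r.
Qed.

Lemma norm1_tikh_min_fin {xp al x} : D xp -> 0 < al ->
  (forall z, D z -> (tikh r F xp al x <= tikh r F xp al z)%E) -> norm1 r x \is a fin_num.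
Proof.
move=> Dxp al0 xmin; have D0 : D (fun=> 0) by apply: D_le Dxp _ => j; rewrite normr0.
rewrite ge0_fin_numE ?norm1_ge0 //; have := xmin _ D0.
rewrite !tikhE (_ : norm1 r (fun=> 0) = 0); last by apply: esum1 => j _; rewrite normr0 mulr0.
rewrite mule0 adde0; apply: contraTT; rewrite -leNgt leye_eq => /eqP ->.
by rewrite gt0_muley ?lte_fin // addey // -ltNge ltry.
Qed.

Lemma shrink_weight_le {xp x be} : D xp -> D x -> 0 < be ->
  (forall z, D z -> (tikh r F xp (L ^+ 2 * be / 2) x <= tikh r F xp (L ^+ 2 * be / 2) z)%E) ->
  (shrink_weight xp x be <= ((4 * `|F xp - F x| / (L * be)) ^+ 2)%:E)%E.
Proof.
move=> Dxp Dx be0 xmin; set al := L ^+ 2 * be / 2; set e := `|F xp - F x|.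
set z := shrink xp x be.
have al0 : 0 < al by rewrite !mulr_gt0 ?exprn_gt0.
have Dz : D z by apply: D_le Dx _; apply: shrink_le.
have N1xE := norm1_shrink xp x be be0.
have [nz [wb [nzE wbE]]] := ge0_addeZ_EFin (divr_gt0 be0 (ltr0Sn _ 1)) (norm1_ge0 _ r_ge0 z)
  (shrink_weight_ge0 xp x be) (esym (etrans (fineK (norm1_tikh_min_fin Dxp al0 xmin)) N1xE)).
have wb0 : 0 <= wb by rewrite -lee_fin -wbE shrink_weight_ge0.
set s := L * be * Num.sqrt wb.
have s0 : 0 <= s by rewrite !mulr_ge0 ?sqrtr_ge0 ?ltW.
have s2E : s ^+ 2 / 4 = al * (be / 2 * wb).
  by rewrite /s /al !exprMn sqr_sqrtr //; field.
have Fxz : `|F x - F z| <= s / 2.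
  have := sqr_sub_le Dx Dz; rewrite (sqnorm_sub_shrink _ _ _ be0) wbE -!EFinM lee_fin => h.
  rewrite -ler_sqr ?nnegrE ?divr_ge0 //; apply: le_trans h _.
  by rewrite le_eqVlt /s !expr_div_n !exprMn sqr_sqrtr //; apply/orP; left; apply/eqP; field.
have Fxpz : `|F xp - F z| <= e + s / 2.
  by rewrite -[F xp](subrK (F x)) -addrA (le_trans (ler_normD _ _)) // lerD2l.
have gain : e ^+ 2 / 2 + s ^+ 2 / 4 <= (e + s / 2) ^+ 2 / 2.
  have := xmin z Dz; rewrite !tikhE N1xE nzE wbE -!EFinM -!EFinD lee_fin => opt.
  have ez2 : `|F xp - F z| ^+ 2 <= (e + s / 2) ^+ 2.
    by rewrite ler_sqr ?nnegrE ?addr_ge0 ?divr_ge0 ?normr_ge0.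
  move: opt; rewrite -/e -/al s2E; lra.
have := quadratic_gain_le _ _ (normr_ge0 _) s0 gain.
rewrite wbE lee_fin => se.
have sw : Num.sqrt wb <= 4 * e / (L * be) by rewrite ler_pdivlMr ?mulr_gt0 // mulrC.
by rewrite -(sqr_sqrtr wb0) !expr2 ler_pM ?sqrtr_ge0.
Qed.

Lemma kt_level_le_residual {xp x be} : D xp -> D x -> 0 < be ->
  (forall z, D z -> (tikh r F xp (L ^+ 2 * be / 2) x <= tikh r F xp (L ^+ 2 * be / 2) z)%E) ->
  (kt_level xp be <= ((16 / L ^+ 2 + 4 * L ^+ 2) * `|F xp - F x| ^+ 2 / be ^+ 2)%:E)%E.
Proof.
move=> Dxp Dx be0 xmin; apply: le_trans (kt_level_le_shrink xp x _ be0) _.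
have [wb -> wble] :=
  ge0_bounded_EFin (shrink_weight_ge0 xp x be) (shrink_weight_le Dxp Dx be0 xmin).
have [q -> qle] := ge0_bounded_EFin (sqnorm_ge0 a _) (sqnorm_sub_le Dxp Dx).
rewrite -EFinM -EFinD lee_fin; apply: le_trans (lerD wble (ler_wpM2l _ qle)) _.
  by rewrite divr_ge0 ?sqr_ge0.
by rewrite le_eqVlt; apply/orP; left; apply/eqP; field; rewrite !gt_eqF.
Qed.

Lemma tikh_min_le_kt {t k xp al x} : 1 < t < 2 -> D xp -> ktnorm a r t xp = k%:E -> 0 < al ->
  (forall z, D z -> (tikh r F xp al x <= tikh r F xp al z)%E) ->
  (tikh r F xp al x <= (kt_tikh_const t L * k `^ t * al `^ (2 - t))%:E)%E.
Proof.
move=> ht Dxp kE al0 xmin; have [Dz tz] := tikh_kt_trunc_le ht Dxp kE al0.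
exact: le_trans (xmin _ Dz) tz.
Qed.

Lemma residual_le_of_tikh {t C2 xp al x} : 0 < al -> 0 <= C2 ->
  (tikh r F xp al x <= (C2 * al `^ (2 - t))%:E)%E ->
  `|F xp - F x| <= Num.sqrt (2 * C2) * al `^ ((2 - t) / 2).
Proof.
move=> al0 C20; rewrite tikhE => h.
have reg0 : (0 <= al%:E * norm1 r x)%E by rewrite mule_ge0 ?lee_fin ?norm1_ge0 ?ltW.
have := le_trans (leeDl _ reg0) h; rewrite lee_fin => hF.
have -> : al `^ ((2 - t) / 2) = Num.sqrt (al `^ (2 - t)).
  by rewrite -powR12_sqrt ?powR_ge0 // -powRrM.
have C2x2 : 0 <= 2 * C2 by rewrite mulr_ge0.
rewrite -(sqrtrM _ C2x2) -[X in X <= _]ger0_norm // -sqrtr_sqr ler_sqrt; last first.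
  by rewrite mulr_ge0 ?powR_ge0.
lra.
Qed.

Lemma ktnorm_le_of_residual {t xp} {xa : R -> Lam -> R} {C3} : 0 < t -> D xp ->
  (forall al, 0 < al ->
     D (xa al) /\ forall z, D z -> (tikh r F xp al (xa al) <= tikh r F xp al z)%E) ->
  (forall al, 0 < al -> `|F xp - F (xa al)| <= C3 * al `^ ((2 - t) / 2)) -> 0 <= C3 ->
  (ktnorm a r t xp <= (kt_resid_const t L * C3 `^ (2 / t))%:E)%E.
Proof.
move=> t0 Dxp xmin hC3 C30.
set K := 16 / L ^+ 2 + 4 * L ^+ 2; set c := L ^+ 2 / 2.
have K0 : 0 <= K.
  exact: addr_ge0 (divr_ge0 (ler0n _ 16) (sqr_ge0 L)) (mulr_ge0 (ler0n _ 4) (sqr_ge0 L)).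
have c0 : 0 < c by rewrite divr_gt0 ?exprn_gt0.
have -> : kt_resid_const t L * C3 `^ (2 / t) = (K * c `^ (2 - t) * C3 ^+ 2) `^ t^-1.
  by rewrite powRM ?mulr_ge0 ?powR_ge0 ?sqr_ge0 // -powR_mulrn // -powRrM.
apply: ktnorm_le => // [|be be0]; first by rewrite !mulr_ge0 ?powR_ge0 ?sqr_ge0.
set al := L ^+ 2 * be / 2; have al0 : 0 < al by rewrite !mulr_gt0 ?exprn_gt0.
have [Dx xm] := xmin al al0.
apply: le_trans (kt_level_le_residual Dxp Dx be0 xm) _; rewrite lee_fin.
have e2 : `|F xp - F (xa al)| ^+ 2 <= C3 ^+ 2 * al `^ (2 - t).
  rewrite (_ : al `^ (2 - t) = (al `^ ((2 - t) / 2)) ^+ 2); last first.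
    by rewrite -powR_mulrn ?powR_ge0 // -powRrM divfK.
  by rewrite -exprMn ler_sqr ?nnegrE ?mulr_ge0 ?powR_ge0 ?hC3.
have alE : al `^ (2 - t) = c `^ (2 - t) * (be ^+ 2 / be `^ t).
  have -> : al = c * be by rewrite /al /c mulrAC.
  rewrite (powRM _ (ltW c0) (ltW be0)) [be `^ _]powRB ?(gt_eqF be0) ?implybT //.
  by rewrite [be `^ 2]powR_mulrn ?(ltW be0).
apply: le_trans (ler_wpM2r _ (ler_wpM2l K0 e2)) _; first by rewrite invr_ge0 sqr_ge0.
rewrite alE le_eqVlt; apply/orP; left; apply/eqP.
by field; rewrite !gt_eqF ?powR_gt0.
Qed.

End tikhonov.

End kt_level.

Theorem theorem5p3 (R : realType) (t L : R) (ht : 1 < t < 2) (hL : 0 < L) :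
  exists Ct : R, exists c : R, 0 < Ct /\ 0 < c /\
  forall (Lam : countType) (a r : Lam -> R) (Y : completeNormedModType R)
    (D : set (Lam -> R)) (F : (Lam -> R) -> Y) (xp : Lam -> R)
    (xa : R -> (Lam -> R)),
  A1 a r D F L -> A2 a D -> D xp ->
  (forall alpha, 0 < alpha ->
     D (xa alpha) /\
     forall x, D x -> (tikh r F xp alpha (xa alpha) <= tikh r F xp alpha x)%E) ->
  let cond2 := fun C2 : R => forall alpha, 0 < alpha ->
     (tikh r F xp alpha (xa alpha) <= (C2 * powR alpha (2 - t))%:E)%E in
  let cond3 := fun C3 : R => forall alpha, 0 < alpha ->
     `|F xp - F (xa alpha)| <= C3 * powR alpha ((2 - t) / 2) in
  [/\ (kt a r t xp <-> exists C2, 0 < C2 /\ cond2 C2),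
      ((exists C2, 0 < C2 /\ cond2 C2) <-> (exists C3, 0 < C3 /\ cond3 C3)),
      (kt a r t xp -> cond2 (Ct * fine (poweR (ktnorm a r t xp) t))),
      (forall C2, 0 < C2 -> cond2 C2 -> cond3 (Num.sqrt (2 * C2))) &
      (forall C3, 0 < C3 -> cond3 C3 ->
         (ktnorm a r t xp <= (c * powR C3 (2 / t))%:E)%E)].
Proof.
have t0 : 0 < t by case/andP: ht => t1 _; exact: lt_trans ltr01 t1.
exists (kt_tikh_const t L), (kt_resid_const t L).
split; first exact: kt_tikh_const_gt0.
split; first exact: kt_resid_const_gt0.
move=> Lam a r Y D F xp xa [ar _ [Dl2 _] _ [_ lip]] A2D Dxp xmin cond2 cond3.
have a_gt0 j : 0 < a j by case: (ar j).
have r_gt0 j : 0 < r j by case: (ar j).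
have i_ii : kt a r t xp -> cond2 (kt_tikh_const t L * fine (poweR (ktnorm a r t xp) t)).
  rewrite /kt /= -ge0_fin_numE ?ktnorm_ge0 // => /fineK kE al al0.
  rewrite -kE poweR_EFin /=.
  have := tikh_min_le_kt _ _ a_gt0 r_gt0 _ _ _ hL Dl2 A2D lip ht Dxp (esym kE) al0.
  by apply; exact: (xmin al al0).2.
have ii_iii C2 : 0 < C2 -> cond2 C2 -> cond3 (Num.sqrt (2 * C2)).
  by move=> C20 h2 al al0; have := residual_le_of_tikh _ r_gt0 _ al0 (ltW C20) (h2 al al0).
have iii_i C3 : 0 < C3 -> cond3 C3 ->
    (ktnorm a r t xp <= (kt_resid_const t L * C3 `^ (2 / t))%:E)%E.
  move=> C30 h3; have := ktnorm_le_of_residual _ _ a_gt0 r_gt0 _ _ _ hL Dl2 A2D lip t0 Dxp xmin.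
  by apply=> //; exact: ltW.
have i_ii' : kt a r t xp -> exists C2, 0 < C2 /\ cond2 C2.
  move=> /i_ii h; set K := fine _ in h; have K0 : 0 <= K by apply/fine_ge0/poweR_ge0.
  exists (kt_tikh_const t L * K + 1); split.
    by rewrite ltr_wpDl // mulr_ge0 // ltW // kt_tikh_const_gt0.
  by move=> al al0; apply: le_trans (h al al0) _; rewrite lee_fin ler_wpM2r ?powR_ge0 ?lerDl.
have ii_iii' : (exists C2, 0 < C2 /\ cond2 C2) -> exists C3, 0 < C3 /\ cond3 C3.
  by move=> [C2 [C20 /(ii_iii _ C20) h]]; exists (Num.sqrt (2 * C2)); rewrite sqrtr_gt0 mulr_gt0.
have iii_i' : (exists C3, 0 < C3 /\ cond3 C3) -> kt a r t xp.
  by move=> [C3 [C30 /(iii_i _ C30) h]]; apply: le_lt_trans h (ltry _).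
by split=> //; [split=> [/i_ii'|/ii_iii'/iii_i'] | split=> [/ii_iii'|/iii_i'/i_ii']].
Qed.
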